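(* Let $\mathcal{C}=\mathrm{CSS}(C_X,C_Z)$ be an $[[n,k,d]]_2$ CSS code exhibiting $(c_1,c_2,\epsilon_0)$-clustering, let $\epsilon<\frac{1}{1000}\min\{\frac{\epsilon_0}{2},\frac{c_2}{4c_1},\frac{d}{2c_1n}\}$ and $\epsilon'=1000\epsilon$. For $y\in G_Z^{\epsilon'}$ define $\mathrm{Cl}(y)=\{y'\in G_Z^{\epsilon'}:|y+y'|_{C_X^\perp}\le 2c_1\epsilon' n\}$. Then the sets $\mathrm{Cl}(y)$, $y\in G_Z^{\epsilon'}$, form a partition of $G_Z^{\epsilon'}$ (any two are equal or disjoint, and $y\in\mathrm{Cl}(y)$), and moreover: (1) any two distinct clusters $\mathrm{Cl}(y)\ne\mathrm{Cl}(y')$ satisfy $\mathrm{dis}(\mathrm{Cl}(y),\mathrm{Cl}(y'))\ge c_2n$; (2) for every $y\in G_Z^{\epsilon'}$ and $c\in C_Z$, $\mathrm{Cl}(y+c)=\mathrm{Cl}(y)+c$, and $\mathrm{Cl}(y+c)=\mathrm{Cl}(y)$ if and only if $c\in C_X^\perp$.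
   Context: Over $\mathbb{F}_2$: $C_X=\ker H_X$, $C_Z=\ker H_Z$, $H_X\in\mathbb{F}_2^{m_X\times n}$, $H_Z\in\mathbb{F}_2^{m_Z\times n}$, $C_X^\perp\subseteq C_Z$, distance $d=\min\{|y|:y\in(C_Z\setminus C_X^\perp)\cup(C_X\setminus C_Z^\perp)\}$. $|y|_C=\min_{y'\in C}|y+y'|$, $\mathrm{dis}(S,T)=\min_{s\in S,t\in T}|s-t|$, $G_X^\epsilon=\{y:|H_Xy|\le\epsilon m_X\}$, $G_Z^\epsilon=\{y:|H_Zy|\le\epsilon m_Z\}$. $(c_1,c_2,\epsilon_0)$-clustering: for all $0<\epsilon<\epsilon_0$, every $y\in G_X^\epsilon$ has $|y|_{C_Z^\perp}\le c_1\epsilon n$ or $\ge c_2 n$, and every $y\in G_Z^\epsilon$ has $|y|_{C_X^\perp}\le c_1\epsilon n$ or $\ge c_2n$. *)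

From HB Require Import structures.
From mathcomp Require Import all_boot all_order all_algebra.
Set Implicit Arguments. Unset Strict Implicit. Unset Printing Implicit Defensive.
Import Order.TTheory GRing.Theory Num.Theory.
Local Open Scope ring_scope.

Notation vec n := 'cV['F_2]_n.

Definition wt (m : nat) (v : vec m) : nat := #|[set i : 'I_m | v i 0 != 0]|.

Definition dotv (n : nat) (x y : vec n) : 'F_2 := (x^T *m y) 0 0.

Definition kerC (m n : nat) (H : 'M['F_2]_(m, n)) : {set vec n} :=
  [set y | H *m y == 0].

Definition dualC (n : nat) (C : {set vec n}) : {set vec n} :=
  [set y | [forall x in C, dotv x y == 0]].

(* |y|_C = min_{y' in C} |y + y'|   (C is nonempty in all uses) *)
Definition cwt (n : nat) (C : {set vec n}) (y : vec n) : nat :=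
  \big[minn/n]_(y' in C) wt (y + y').

(* dis(S,T) = min_{s in S, t in T} |s - t|   (S, T nonempty in all uses) *)
Definition dis (n : nat) (S T : {set vec n}) : nat :=
  \big[minn/n]_(s in S) \big[minn/n]_(t in T) wt (s - t).

Definition Gset (R : realFieldType) (m n : nat) (H : 'M['F_2]_(m, n)) (eps : R)
  : {set vec n} :=
  [set y | (wt (H *m y))%:R <= eps * m%:R].

Definition css (mX mZ n : nat) (HX : 'M['F_2]_(mX, n)) (HZ : 'M['F_2]_(mZ, n)) :=
  dualC (kerC HX) \subset kerC HZ.

Definition is_distance (mX mZ n : nat) (HX : 'M['F_2]_(mX, n)) (HZ : 'M['F_2]_(mZ, n))
  (d : nat) : Prop :=
  let L := (kerC HZ :\: dualC (kerC HX)) :|: (kerC HX :\: dualC (kerC HZ)) in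
  (exists2 y, y \in L & wt y = d) /\ (forall y, y \in L -> (d <= wt y)%N).

Definition clustering (R : realFieldType) (mX mZ n : nat)
  (HX : 'M['F_2]_(mX, n)) (HZ : 'M['F_2]_(mZ, n)) (c1 c2 eps0 : R) : Prop :=
  forall eps : R, 0 < eps -> eps < eps0 ->
    (forall y, y \in Gset HX eps ->
       ((cwt (dualC (kerC HZ)) y)%:R <= c1 * eps * n%:R) \/
       (c2 * n%:R <= (cwt (dualC (kerC HZ)) y)%:R)) /\
    (forall y, y \in Gset HZ eps ->
       ((cwt (dualC (kerC HX)) y)%:R <= c1 * eps * n%:R) \/
       (c2 * n%:R <= (cwt (dualC (kerC HX)) y)%:R)).

Definition Cl (R : realFieldType) (mX mZ n : nat)
  (HX : 'M['F_2]_(mX, n)) (HZ : 'M['F_2]_(mZ, n)) (c1 eps' : R) (y : vec n)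
  : {set vec n} :=
  [set y' in Gset HZ eps' |
     (cwt (dualC (kerC HX)) (y + y'))%:R <= 2 * c1 * eps' * n%:R].

From mathcomp Require Import all_boot all_order all_algebra.
From mathcomp Require Import lra.
Import Order.TTheory GRing.Theory Num.Theory.
Set Implicit Arguments. Unset Strict Implicit.
Local Open Scope ring_scope.

(* Over F_2 the coset weight rho(a, b) = |a + b|_{C_X^perp} is a pseudometric.
   On G_Z^{2 eps'} (which contains all sums of two elements of G_Z^{eps'})
   clustering says rho only takes values <= r := 2 c1 eps' n or >= c2 n, and
   r < c2 n / 2.  Hence rho <= 2r forces rho <= r, so the balls Cl(y) of
   radius r are the classes of an equivalence relation, and points of distinct
   balls are at rho-distance, hence Hamming distance, at least c2 n.
   Translating by c in C_Z preserves G_Z^{eps'} and rho, and translating by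
   c in C_X^perp fixes Cl(y); conversely Cl(y + c) = Cl(y) puts y + c in
   Cl(y), i.e. |c|_{C_X^perp} <= r < d, which forces c in C_X^perp. *)

Lemma addvv n (v : vec n) : v + v = 0.
Proof. by apply/matrixP=> i j; rewrite !mxE addrr_pchar2 // (pchar_Fp (p := 2)). Qed.

Lemma addvK n (a u : vec n) : a + u + u = a.
Proof. by rewrite -addrA addvv addr0. Qed.

Lemma oppv n (v : vec n) : - v = v.
Proof. by apply/esym/eqP; rewrite -addr_eq0 addvv. Qed.

Lemma wt_le_dim n (v : vec n) : (wt v <= n)%N.
Proof. by rewrite /wt (leq_trans (max_card _)) ?card_ord. Qed.

Lemma wt0 n : wt (0 : vec n) = 0%N.
Proof. by apply/eqP; rewrite cards_eq0; apply/eqP/setP => i; rewrite !inE mxE eqxx. Qed.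

Lemma wtD n (a b : vec n) : (wt (a + b) <= wt a + wt b)%N.
Proof.
rewrite /wt (leq_trans _ (leq_card_setU _ _)) //; apply: subset_leq_card.
apply/subsetP => i; rewrite !inE mxE; apply: contraR.
by rewrite negb_or !negbK => /andP[/eqP-> /eqP->]; rewrite addr0.
Qed.

Lemma dualC0 n (C : {set vec n}) : 0 \in dualC C.
Proof. by rewrite inE; apply/forall_inP => x _; rewrite /dotv mulmx0 mxE. Qed.

Lemma dualCD n (C : {set vec n}) x y :
  x \in dualC C -> y \in dualC C -> x + y \in dualC C.
Proof.
rewrite !inE => /forall_inP hx /forall_inP hy; apply/forall_inP => z zC.
by rewrite /dotv mulmxDr mxE -!/(dotv _ _) (eqP (hx z zC)) (eqP (hy z zC)) addr0.
Qed.

Section CosetWeight.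
Variables (n : nat) (C : {set vec n}).
Local Notation D := (dualC C).

Lemma cwt_le_wt_add y u : u \in D -> (cwt D y <= wt (y + u))%N.
Proof. by move=> uD; rewrite /cwt -leEnat -minEnat bigmin_le_cond. Qed.

Lemma cwt_le_wt y : (cwt D y <= wt y)%N.
Proof. by have := cwt_le_wt_add y (dualC0 C); rewrite addr0. Qed.

Lemma cwt_attained y : exists2 u, u \in D & cwt D y = wt (y + u).
Proof.
rewrite /cwt -minEnat.
have [u uD ->] := @eq_bigmin _ _ _ n _ _ (fun u => wt (y + u)) (dualC0 C)
  (fun v _ => wt_le_dim _).
by exists u.
Qed.

Lemma cwt_ge k y : (k <= n)%N -> (forall u, u \in D -> k <= wt (y + u))%N ->
  (k <= cwt D y)%N.
Proof. by move=> kn ku; rewrite /cwt -leEnat -minEnat; apply/bigmin_geP. Qed.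

Lemma cwtD a b : (cwt D (a + b) <= cwt D a + cwt D b)%N.
Proof.
have [u uD ->] := cwt_attained a; have [v vD ->] := cwt_attained b.
by rewrite (leq_trans (cwt_le_wt_add _ (dualCD uD vD))) // addrACA wtD.
Qed.

Lemma cwt_dual u : u \in D -> cwt D u = 0%N.
Proof. by move=> uD; apply/eqP; rewrite -leqn0 -(wt0 n) -(addvv u) cwt_le_wt_add. Qed.

Lemma cwt_addr_dual a u : u \in D -> cwt D (a + u) = cwt D a.
Proof.
move=> uD; apply/eqP; rewrite eqn_leq.
have := cwtD (a + u) u; have := cwtD a u.
by rewrite addvK (cwt_dual uD) !addn0 => -> ->.
Qed.

End CosetWeight.

Lemma le_dis (R : numDomainType) n (S T : {set vec n}) (x : R) :
  x <= n%:R -> (forall s t, s \in S -> t \in T -> x <= (wt (s - t))%:R) ->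
  x <= (dis S T)%:R.
Proof.
have minn_closed a b : x <= a%:R -> x <= b%:R -> x <= (minn a b)%:R.
  by rewrite /minn; case: ifP.
move=> xn hST; apply: (big_ind (fun k : nat => x <= k%:R)) => // s sS.
by apply: (big_ind (fun k : nat => x <= k%:R)) => // t tT; apply: hST.
Qed.

Section Clusters.
Variables (R : realFieldType) (n : nat) (C G : {set vec n}) (r : R).
Local Notation rho a b := (cwt (dualC C) (a + b))%:R.

Definition cluster (y : vec n) : {set vec n} := [set y' in G | rho y y' <= r].

Lemma mem_cluster y y' : (y' \in cluster y) = (y' \in G) && (rho y y' <= r).
Proof. by rewrite inE. Qed.

Lemma rho_le2 a b c : rho a b <= r -> rho b c <= r -> rho a c <= 2 * r.
Proof.
have -> : a + c = (a + b) + (b + c) by rewrite addrA addvK.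
move=> hab hbc; rewrite mulr_natl mulr2n (le_trans _ (lerD hab hbc)) //.
by rewrite -natrD ler_nat cwtD.
Qed.

Lemma cluster_translate c y : (forall z, (z + c \in G) = (z \in G)) ->
  cluster (y + c) = [set z + c | z in cluster y].
Proof.
move=> Gc; apply/setP => z; apply/idP/imsetP => [|[w wC ->]].
  rewrite mem_cluster => /andP[zG hz]; exists (z + c); last by rewrite addvK.
  by rewrite mem_cluster Gc zG addrA (addrAC y z c).
by move: wC; rewrite !mem_cluster Gc addrACA addvv addr0.
Qed.

Lemma cluster_translate_dual c y : c \in dualC C -> cluster (y + c) = cluster y.
Proof. by move=> cD; apply/setP => z; rewrite !mem_cluster addrAC cwt_addr_dual. Qed.

Hypothesis r_ge0 : 0 <= r.

Lemma mem_cluster_self y : y \in G -> y \in cluster y.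
Proof. by move=> yG; rewrite mem_cluster yG addvv cwt_dual ?dualC0. Qed.

Lemma cluster_translate_eq c y : y + c \in G -> cluster (y + c) = cluster y ->
  (cwt (dualC C) c)%:R <= r.
Proof.
move=> ycG eqCl; have := mem_cluster_self ycG.
by rewrite eqCl mem_cluster addrA addvv add0r => /andP[].
Qed.

Variable sep : R.
Hypothesis sep_gt : 2 * r < sep.
Hypothesis gap : forall a b, a \in G -> b \in G -> rho a b <= r \/ sep <= rho a b.

Lemma rho_le2_le a b : a \in G -> b \in G -> rho a b <= 2 * r -> rho a b <= r.
Proof.
move=> aG bG h; case: (gap aG bG) => // h'.
by have := lt_le_trans sep_gt (le_trans h' h); rewrite ltxx.
Qed.

Lemma cluster_subset y y' : y' \in G -> rho y y' <= r -> cluster y \subset cluster y'.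
Proof.
move=> y'G hyy'; apply/subsetP => w; rewrite !mem_cluster => /andP[wG hw].
by rewrite wG rho_le2_le // (rho_le2 (b := y)) // addrC.
Qed.

Lemma cluster_eq_meet y y' z : y \in G -> y' \in G ->
  z \in cluster y -> z \in cluster y' -> cluster y = cluster y'.
Proof.
move=> yG y'G; rewrite !mem_cluster => /andP[_ hz] /andP[_ hz'].
have hyy' : rho y y' <= r by rewrite rho_le2_le // (rho_le2 (b := z)) // addrC.
by apply/eqP; rewrite eqEsubset !cluster_subset // addrC.
Qed.

Lemma cluster_eq_or_disjoint y y' : y \in G -> y' \in G ->
  cluster y = cluster y' \/ [disjoint cluster y & cluster y'].
Proof.
move=> yG y'G; rewrite -setI_eq0.
case: (set_0Vmem (cluster y :&: cluster y')) => [->|[z]]; first by right.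
by rewrite inE => /andP[zy zy']; left; apply: (cluster_eq_meet yG y'G zy zy').
Qed.

Lemma cluster_far y y' s t : y \in G -> y' \in G -> cluster y != cluster y' ->
  s \in cluster y -> t \in cluster y' -> sep <= (wt (s - t))%:R.
Proof.
move=> yG y'G neCl sy ty'; rewrite oppv.
have sG : s \in G by move: sy; rewrite mem_cluster => /andP[].
have tG : t \in G by move: ty'; rewrite mem_cluster => /andP[].
case: (gap sG tG) => [hst|]; last by move/le_trans; apply; rewrite ler_nat cwt_le_wt.
suff ty : t \in cluster y by rewrite (cluster_eq_meet yG y'G ty ty') eqxx in neCl.
move: sy; rewrite !mem_cluster tG => /andP[_ hs].
by rewrite rho_le2_le // (rho_le2 (b := s)).
Qed.

Lemma dis_cluster y y' : y \in G -> y' \in G -> cluster y != cluster y' ->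
  sep <= (dis (cluster y) (cluster y'))%:R.
Proof.
move=> yG y'G neCl; have far := cluster_far yG y'G neCl.
apply: le_dis => //.
apply: le_trans (far _ _ (mem_cluster_self yG) (mem_cluster_self y'G)) _.
by rewrite ler_nat wt_le_dim.
Qed.

End Clusters.

Lemma GsetD (R : realFieldType) m n (H : 'M['F_2]_(m, n)) (e : R) a b :
  a \in Gset H e -> b \in Gset H e -> a + b \in Gset H (2 * e).
Proof.
rewrite !inE mulmxDr -mulrA mulr_natl mulr2n => ha hb.
by rewrite (le_trans _ (lerD ha hb)) // -natrD ler_nat wtD.
Qed.

Lemma Gset_addr_ker (R : realFieldType) m n (H : 'M['F_2]_(m, n)) (e : R) c z :
  c \in kerC H -> (z + c \in Gset H e) = (z \in Gset H e).
Proof. by rewrite !inE mulmxDr => /eqP->; rewrite addr0. Qed.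

Lemma clustering_gap (R : realFieldType) mX mZ n (HX : 'M['F_2]_(mX, n))
    (HZ : 'M['F_2]_(mZ, n)) (c1 c2 eps0 e : R) a b :
  clustering HX HZ c1 c2 eps0 -> 0 < e -> 2 * e < eps0 ->
  a \in Gset HZ e -> b \in Gset HZ e ->
  (cwt (dualC (kerC HX)) (a + b))%:R <= 2 * c1 * e * n%:R \/
  c2 * n%:R <= (cwt (dualC (kerC HX)) (a + b))%:R.
Proof.
move=> hcl e_gt0 e_lt aG bG.
have [_ /(_ _ (GsetD aG bG))] := hcl _ (mulr_gt0 (ltr0Sn _ 1) e_gt0) e_lt.
by rewrite mulrCA mulrA.
Qed.

Lemma distance_le_cwt mX mZ n (HX : 'M['F_2]_(mX, n)) (HZ : 'M['F_2]_(mZ, n))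
    d c :
  css HX HZ -> is_distance HX HZ d ->
  c \in kerC HZ -> c \notin dualC (kerC HX) -> (d <= cwt (dualC (kerC HX)) c)%N.
Proof.
move=> hcss [[w _ <-] dist_min] cZ cD; apply: cwt_ge => [|u uD]; first exact: wt_le_dim.
apply: dist_min; rewrite in_setU in_setD; apply/orP; left; apply/andP; split.
  by apply: contra cD => cuD; rewrite -(addvK c u) dualCD.
by move: cZ (subsetP hcss u uD); rewrite !inE mulmxDr => /eqP-> /eqP->; rewrite addr0.
Qed.

Lemma small_eps_bounds (R : realFieldType) (n d : nat) (c1 c2 eps0 e : R) :
  0 < c1 -> 0 < e ->
  e < Num.min (eps0 / 2) (Num.min (c2 / (4 * c1)) (d%:R / (2 * c1 * n%:R))) ->
  [/\ 2 * e < eps0, 2 * (2 * c1 * e * n%:R) < c2 * n%:R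
    & 2 * c1 * e * n%:R < d%:R].
Proof.
move=> c1_gt0 e_gt0; rewrite !lt_min => /and3P[e_eps0 e_c2 e_d].
have n_gt0 : 0 < n%:R :> R.
  rewrite ltr0n lt0n; apply: contraTneq e_d => ->.
  by rewrite mulr0 invr0 mulr0 -leNgt ltW.
rewrite ltr_pdivlMr // in e_eps0; rewrite ltr_pdivlMr ?mulr_gt0 // in e_c2.
rewrite ltr_pdivlMr ?mulr_gt0 // in e_d.
split; [lra | rewrite mulrA ltr_pM2r //; lra | lra].
Qed.

Theorem lemma4p10 (R : realFieldType) (mX mZ n d : nat)
  (HX : 'M['F_2]_(mX, n)) (HZ : 'M['F_2]_(mZ, n)) (c1 c2 eps0 eps : R) :
  css HX HZ ->
  is_distance HX HZ d ->
  0 < c1 -> 0 < c2 -> 0 < eps0 ->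
  clustering HX HZ c1 c2 eps0 ->
  0 < eps ->
  eps < 1000^-1 * Num.min (eps0 / 2)
                   (Num.min (c2 / (4 * c1)) (d%:R / (2 * c1 * n%:R))) ->
  let eps' := 1000 * eps in
  let G := Gset HZ eps' in
  let Cl := Cl HX HZ c1 eps' in
  (forall y, y \in G -> y \in Cl y) /\
  (forall y y', y \in G -> y' \in G -> Cl y = Cl y' \/ [disjoint Cl y & Cl y']) /\
  (forall y y', y \in G -> y' \in G -> Cl y != Cl y' ->
     c2 * n%:R <= (dis (Cl y) (Cl y'))%:R) /\
  (forall y c, y \in G -> c \in kerC HZ ->
     Cl (y + c) = [set z + c | z in Cl y] /\
     (Cl (y + c) = Cl y <-> c \in dualC (kerC HX))).
Proof.
move=> hcss hdist c1_gt0 _ _ hcl eps_gt0 eps_lt eps' G Cl.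
have eps'_gt0 : 0 < eps' by rewrite mulr_gt0.
have eps'_lt : eps' < Num.min (eps0 / 2)
    (Num.min (c2 / (4 * c1)) (d%:R / (2 * c1 * n%:R))) by rewrite -ltr_pdivlMl.
have [eps'_eps0 r_sep r_d] := small_eps_bounds c1_gt0 eps'_gt0 eps'_lt.
have r_ge0 : 0 <= 2 * c1 * eps' * n%:R by rewrite !mulr_ge0 // ltW.
have gap := clustering_gap hcl eps'_gt0 eps'_eps0.
have -> : Cl = cluster (kerC HX) G (2 * c1 * eps' * n%:R) by [].
split; first exact: mem_cluster_self.
split; first exact: cluster_eq_or_disjoint r_sep gap.
split=> [y y' yG y'G neCl|]; first exact: (dis_cluster r_ge0 r_sep gap yG y'G neCl).
move=> y c yG cZ; split.
  by apply: cluster_translate => z; apply: Gset_addr_ker.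
split=> [eqCl|]; last exact: cluster_translate_dual.
apply: contraT => cD.
have ycG : y + c \in G by rewrite Gset_addr_ker.
have := le_lt_trans (cluster_translate_eq r_ge0 ycG eqCl) r_d.
by rewrite ltr_nat ltnNge (distance_le_cwt hcss hdist cZ cD).
Qed.
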